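(* Let $k$ be a field. In $\operatorname{Fun}(\Gamma_-^o,k)$, let $P=s_2$ and let $\eta:s_2\to s_1=k$ be the canonical map. Let $P_\bullet$ be the complex with $P_i=P^{\otimes i}$ ($P_0=k$) and differential $d_i:P_i\to P_{i-1}$, $$d_i=\sum_{1\le j\le i}(-1)^j\,\operatorname{id}^{\otimes(j-1)}\otimes\eta\otimes\operatorname{id}^{\otimes(i-j)}.$$ Then $P_\bullet$ is a projective resolution of $t_1$ in $\operatorname{Fun}(\Gamma_-^o,k)$.
   Context: $\Gamma_-$ is the category of finite non-empty sets and surjective maps; $[n]$ denotes a set with $n$ elements. $s_n\in\operatorname{Fun}(\Gamma_-^o,k)$ is the functor represented by $[n]$: $s_n([m])=k[\Gamma_-([m],[n])]$; thus $s_1$ is the constant functor $k$, and the unique maps $[n]\to[1]$ give canonical maps $s_n\to s_1$. $t_1\in\operatorname{Fun}(\Gamma_-^o,k)$ is the functor co-represented by $[1]$: $t_1([1])=k$, $t_1([n])=0$ for $n\ge2$; it is a quotient of $s_1=k$, which gives the augmentation $P_0=k\to t_1$. Tensor products are pointwise. *)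

From HB Require Import structures.
From mathcomp Require Import all_boot all_order all_algebra.
Set Implicit Arguments.
Unset Strict Implicit.
Unset Printing Implicit Defensive.
Import GRing.Theory.
Local Open Scope ring_scope.

(* Skeleton of Gamma_- : the object [n.+1] (finite set with n.+1 elements) is
   represented by the index n : nat, with underlying set 'I_n.+1.
   A map [m.+1] -> [n.+1] is a finite function; it is a morphism of Gamma_-
   iff it is surjective. *)
Definition surjb (m n : nat) (f : {ffun 'I_m.+1 -> 'I_n.+1}) : bool :=
  [forall j, exists i, f i == j].

(* A functor Gamma_-^o -> k-Vect: a k-vector space for each object and a
   (contravariant) action of maps; laws only required on surjections. *)
Record fdata (k : fieldType) := FData {
  fobj : nat -> lmodType k;
  fmap : forall m n : nat, {ffun 'I_m.+1 -> 'I_n.+1} -> fobj n -> fobj m }.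
Arguments fobj {k} f n : rename.
Arguments fmap {k} f {m n} _ _ : rename.

Definition is_functor (k : fieldType) (F : fdata k) : Prop :=
  (forall m n (f : {ffun 'I_m.+1 -> 'I_n.+1}), surjb f ->
     forall (a : k) (x y : fobj F n),
       fmap F f (a *: x + y) = a *: fmap F f x + fmap F f y) /\
  (forall n (x : fobj F n), fmap F [ffun i : 'I_n.+1 => i] x = x) /\
  (forall l m n (g : {ffun 'I_l.+1 -> 'I_m.+1}) (f : {ffun 'I_m.+1 -> 'I_n.+1}),
     surjb g -> surjb f -> forall x : fobj F n,
       fmap F [ffun i => f (g i)] x = fmap F g (fmap F f x)).

Definition is_nat (k : fieldType) (F G : fdata k)
    (t : forall n, fobj F n -> fobj G n) : Prop :=
  (forall n (a : k) (x y : fobj F n), t n (a *: x + y) = a *: t n x + t n y) /\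
  (forall m n (f : {ffun 'I_m.+1 -> 'I_n.+1}), surjb f ->
     forall x : fobj F n, t m (fmap F f x) = fmap G f (t n x)).

(* projective object of Fun(Gamma_-^o, k): lifting along epimorphisms
   (= objectwise surjective natural transformations) *)
Definition projective (k : fieldType) (P : fdata k) : Prop :=
  forall (G H : fdata k), is_functor G -> is_functor H ->
  forall (pi : forall n, fobj G n -> fobj H n)
         (phi : forall n, fobj P n -> fobj H n),
    is_nat pi -> (forall n (y : fobj H n), exists x, pi n x = y) ->
    is_nat phi ->
    exists psi : forall n, fobj P n -> fobj G n,
      is_nat psi /\ forall n (x : fobj P n), pi n (psi n x) = phi n x.

(* Surjections [m.+1] -> [2] : the basis of s_2([m.+1]). *)
Definition Surj2 (m : nat) : finType := {f : {ffun 'I_m.+1 -> 'I_2} | surjb f}.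

(* i-tuples of such surjections : the basis of (s_2)^{(x) i}([m.+1])
   (pointwise tensor product k[X]^{(x) i} = k[X^i]). *)
Definition Tup (i m : nat) : finType := {ffun 'I_i -> Surj2 m}.

(* P_i([m.+1]) = k[Tup i m], as finitely supported = all functions Tup i m -> k *)
Definition Pobj (k : fieldType) (i m : nat) : lmodType k := {ffun Tup i m -> k^o}.

(* action of f : [m.+1] -> [n.+1] : basis element x |-> (x_l o f)_l *)
Definition Pmap (k : fieldType) (i m n : nat) (f : {ffun 'I_m.+1 -> 'I_n.+1})
    (v : Pobj k i n) : Pobj k i m :=
  [ffun y : Tup i m =>
     \sum_(x : Tup i n | [forall l, [forall a, val (x l) (f a) == val (y l) a]]) v x].

Definition Pfun (k : fieldType) (i : nat) : fdata k :=
  @FData k (fun m => Pobj k i m) (fun m n f v => Pmap f v).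

(* deleting the j-th tensor factor (0-indexed) *)
Definition delta (i : nat) (j : 'I_i.+1) (m : nat) (x : Tup i.+1 m) : Tup i m :=
  [ffun l => x (lift j l)].

(* d_{i+1} : P_{i+1} -> P_i, basis x |-> sum_{j=1}^{i+1} (-1)^j (x with j-th factor
   removed), i.e. sum_j (-1)^j id^{(x)(j-1)} (x) eta (x) id^{(x)(i+1-j)},
   eta : s_2 -> s_1 = k sending every surjection to 1. *)
Definition dmap (k : fieldType) (i m : nat) (v : Pobj k i.+1 m) : Pobj k i m :=
  [ffun y : Tup i m =>
     \sum_(j < i.+1) (-1) ^+ (j.+1) * \sum_(x : Tup i.+1 m | delta j x == y) v x].

(* t_1 : t_1([1]) = k, t_1([n]) = 0 for n >= 2 ; the object index 0 is [1]. *)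
Definition T1obj (k : fieldType) (m : nat) : lmodType k := {ffun 'I_(m == 0%N) -> k^o}.

Definition T1map (k : fieldType) (m n : nat) (f : {ffun 'I_m.+1 -> 'I_n.+1})
    (v : T1obj k n) : T1obj k m :=
  [ffun a : 'I_(m == 0%N) => \sum_(b : 'I_(n == 0%N)) v b].

Definition T1fun (k : fieldType) : fdata k :=
  @FData k (fun m => T1obj k m) (fun m n f v => T1map f v).

(* augmentation P_0 = k -> t_1 (P_0([m.+1]) = k[one point] = k). *)
Definition eps (k : fieldType) (m : nat) (v : Pobj k 0 m) : T1obj k m :=
  [ffun _ => \sum_x v x].

From HB Require Import structures.
From mathcomp Require Import all_boot all_order all_algebra.
Set Implicit Arguments.
Unset Strict Implicit.
Unset Printing Implicit Defensive.
Import GRing.Theory.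
Local Open Scope ring_scope.

(** A basis element of P_i([m+1]) is an i-tuple of surjections [m+1] -> [2], i.e. a
    map [m+1] -> {0,1}^i all of whose coordinates are onto. Factoring such a map
    through its image S splits P_i as the direct sum over S of the representables
    s_|S|, so P_i is projective by Yoneda: a lift is determined by choosing
    preimages for the canonical tuples enumerating each S.
    For exactness, on [m+1] with m >= 1 pick a surjection x0 : [m+1] -> [2];
    prepending x0 (with sign -1) is a contracting homotopy h, d h + h d = id.
    On [1] there is no such surjection, so P_i([1]) = 0 for i >= 1 and eps is an
    isomorphism P_0([1]) = t_1([1]). Since every chain is a sum of h_x0's over its
    possible first factors x0, and d d h = h d d, induction also gives d d = 0. *)

Lemma sum_fibers (R : nmodType) (A B : finType) (phi : A -> B) (Q : pred B) (F : A -> B -> R) :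
  \sum_(y | Q y) \sum_(x | phi x == y) F x y = \sum_(x | Q (phi x)) F x (phi x).
Proof.
rewrite (partition_big phi Q) //=; apply: eq_bigr => y Qy.
rewrite [RHS](eq_bigl (fun x => phi x == y)) => [|x]; last by rewrite andb_idl // => /eqP ->.
by apply: eq_bigr => x /eqP ->.
Qed.

Lemma linear_sumZ (k : fieldType) (U W : lmodType k) (t : U -> W) :
  linear t -> forall (I : finType) (c : I -> k) (u : I -> U),
  t (\sum_i c i *: u i) = \sum_i c i *: t (u i).
Proof.
move=> tlin I c u; pose tL : {linear U -> W} := HB.pack t (GRing.isLinear.Build _ _ _ _ t tlin).
by rewrite -[t]/(tL : U -> W) linear_sum; under eq_bigr do rewrite linearZ.
Qed.

Lemma sum_rel_linear (k : fieldType) (I J : finType) (P : J -> pred I) :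
  linear (fun v : {ffun I -> k^o} => [ffun y => \sum_(x | P y x) v x] : {ffun J -> k^o}).
Proof.
move=> a v w; apply/ffunP => y; rewrite !ffunE.
under eq_bigr do rewrite !ffunE.
by rewrite big_split /= -mulr_sumr.
Qed.

Lemma surjb_comp m n p (g : {ffun 'I_m.+1 -> 'I_n.+1}) (f : {ffun 'I_p.+1 -> 'I_m.+1}) :
  surjb g -> surjb f -> surjb [ffun a => g (f a)].
Proof.
move=> /forallP gsurj /forallP fsurj; apply/forallP => c.
have /existsP [b /eqP <-] := gsurj c; have /existsP [a /eqP <-] := fsurj b.
by apply/existsP; exists a; rewrite ffunE.
Qed.

Lemma surjb_id n : surjb [ffun a : 'I_n.+1 => a].
Proof. by apply/forallP => a; apply/existsP; exists a; rewrite ffunE. Qed.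

Lemma surjb_from_ord1 n (f : {ffun 'I_1 -> 'I_n.+1}) : surjb f -> n = 0%N.
Proof.
move=> /forallP fsurj.
have /existsP [a /eqP fa] := fsurj ord0; have /existsP [b /eqP fb] := fsurj ord_max.
by move: fb; rewrite !ord1 in fa *; rewrite fa => /(congr1 val).
Qed.

Lemma Surj2_ord1_empty (s : Surj2 0) : False.
Proof. by case: s => f /surjb_from_ord1. Qed.

Definition surj2_witness m : Surj2 m.+1.
Proof.
exists [ffun a : 'I_m.+2 => if a == ord0 then ord0 else ord_max].
apply/forallP => -[[|[|c]] lt_c2] //; apply/existsP.
  by exists ord0; rewrite ffunE eqxx; apply/eqP/val_inj.
by exists ord_max; rewrite ffunE; apply/eqP/val_inj.
Defined.

Lemma tup_eqP i m (x y : Tup i m) :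
  reflect (forall l a, val (x l) a = val (y l) a) (x == y).
Proof.
apply: (iffP eqP) => [-> //|xy]; apply/ffunP => l; apply/val_inj/ffunP => a; exact: xy.
Qed.

Definition tpull i m n (f : {ffun 'I_m.+1 -> 'I_n.+1}) (fsurj : surjb f) (x : Tup i n) :
    Tup i m :=
  [ffun l => exist _ [ffun a => val (x l) (f a)] (surjb_comp (valP (x l)) fsurj)].

Lemma tpullE i m n (f : {ffun 'I_m.+1 -> 'I_n.+1}) (fsurj : surjb f) (x : Tup i n) l a :
  val (tpull fsurj x l) a = val (x l) (f a).
Proof. by rewrite !ffunE. Qed.

Lemma tpull_id i n (x : Tup i n) : tpull (surjb_id n) x = x.
Proof. by apply/eqP/tup_eqP => l a; rewrite tpullE ffunE. Qed.

Lemma tpull_comp i l m n (g : {ffun 'I_l.+1 -> 'I_m.+1}) (f : {ffun 'I_m.+1 -> 'I_n.+1})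
    (gsurj : surjb g) (fsurj : surjb f) (x : Tup i n) :
  tpull (surjb_comp fsurj gsurj) x = tpull gsurj (tpull fsurj x).
Proof. by apply/eqP/tup_eqP => j a; rewrite !tpullE ffunE. Qed.

Lemma delta_tpull i m n (f : {ffun 'I_m.+1 -> 'I_n.+1}) (fsurj : surjb f) (x : Tup i.+1 n) j :
  delta j (tpull fsurj x) = tpull fsurj (delta j x).
Proof. by apply/eqP/tup_eqP => l a; rewrite ffunE !tpullE ffunE. Qed.

Lemma PmapE (k : fieldType) i m n (f : {ffun 'I_m.+1 -> 'I_n.+1}) (fsurj : surjb f)
    (v : Pobj k i n) (y : Tup i m) :
  Pmap f v y = \sum_(x | tpull fsurj x == y) v x.
Proof.
rewrite ffunE; apply: eq_bigl => x.
apply/forallP/tup_eqP => [xy l a|xy l]; last by apply/forallP => a; rewrite -xy tpullE.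
by rewrite tpullE; apply/eqP; have /forallP := xy l; apply.
Qed.

Lemma Pfun_functor (k : fieldType) i : is_functor (Pfun k i).
Proof.
split; [|split].
- by move=> m n f _; apply: sum_rel_linear.
- move=> n v; apply/ffunP => y; rewrite /= (PmapE (surjb_id n)) (big_pred1 y) // => x.
  by rewrite /= tpull_id.
- move=> l m n g f gsurj fsurj v; apply/ffunP => y.
  rewrite /= (PmapE (surjb_comp fsurj gsurj)) (PmapE gsurj).
  under [RHS]eq_bigr do rewrite (PmapE fsurj).
  by rewrite sum_fibers; apply: eq_bigl => x; rewrite tpull_comp.
Qed.

Lemma T1fun_functor (k : fieldType) : is_functor (T1fun k).
Proof.
split; [|split].
- by move=> m n f _; apply: sum_rel_linear.
- move=> [|n] v; apply/ffunP => -[[|c] //= lt_c]; rewrite ffunE big_ord1.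
  by congr (v _); apply: val_inj.
- move=> [|l] m n g f gsurj fsurj v; apply/ffunP => c; last by case: c.
  by move: g gsurj => g /surjb_from_ord1 m0; subst m; rewrite !ffunE /= big_ord1 ffunE.
Qed.

Lemma eps_nat (k : fieldType) : is_nat (F := Pfun k 0) (G := T1fun k) (@eps k).
Proof.
split; first by move=> n; apply: sum_rel_linear.
move=> [|m] n f fsurj v; apply/ffunP => c; last by case: c.
move: fsurj (fsurj) => /surjb_from_ord1 n0 fsurj; subst n.
rewrite /= !ffunE big_ord1 ffunE.
under eq_bigr do rewrite (PmapE fsurj).
by rewrite (sum_fibers _ predT).
Qed.

Lemma dmap_is_linear (k : fieldType) i m : linear (@dmap k i m).
Proof.
move=> a v w; apply/ffunP => y; rewrite !ffunE scaler_sumr -big_split /=.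
apply: eq_bigr => j _; under eq_bigr do rewrite !ffunE.
by rewrite big_split /= -mulr_sumr mulrDr mulrCA.
Qed.

HB.instance Definition _ (k : fieldType) i m :=
  GRing.isLinear.Build k (Pobj k i.+1 m) (Pobj k i m) _ (@dmap k i m) (@dmap_is_linear k i m).

Lemma dmap_nat (k : fieldType) i : is_nat (F := Pfun k i.+1) (G := Pfun k i) (@dmap k i).
Proof.
split=> [n|m n f fsurj v]; first exact: dmap_is_linear.
apply/ffunP => y; rewrite /= (PmapE fsurj) !ffunE.
under [RHS]eq_bigr do rewrite ffunE.
rewrite exchange_big; apply: eq_bigr => j _; rewrite -mulr_sumr; congr (_ * _).
under eq_bigr do rewrite (PmapE fsurj).
by rewrite !sum_fibers; apply: eq_bigl => x; rewrite delta_tpull.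
Qed.

Section Contraction.
Variables (k : fieldType) (m : nat) (x0 : Surj2 m).

Definition tcons i (x : Tup i m) : Tup i.+1 m :=
  [ffun l => if unlift ord0 l is Some l' then x l' else x0].

Lemma tcons0 i (x : Tup i m) : tcons x ord0 = x0.
Proof. by rewrite ffunE unlift_none. Qed.

Lemma delta0_tcons i (x : Tup i m) : delta ord0 (tcons x) = x.
Proof. by apply/ffunP => l; rewrite !ffunE liftK. Qed.

Lemma tcons_eqE i (x : Tup i m) (y : Tup i.+1 m) :
  (tcons x == y) = (y ord0 == x0) && (x == delta ord0 y).
Proof.
apply/eqP/andP => [<-|[/eqP y0 /eqP ->]]; first by rewrite tcons0 delta0_tcons.
apply/ffunP => l; rewrite ffunE; case: unliftP => [l' ->|->] //.
by rewrite ffunE.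
Qed.

Lemma delta_lift_tcons i (x : Tup i.+1 m) (j : 'I_i.+1) :
  delta (lift ord0 j) (tcons x) = tcons (delta j x).
Proof.
apply/ffunP => l; rewrite !ffunE; case: (unliftP ord0 l) => [l' ->|->].
  rewrite (_ : lift _ _ = lift ord0 (lift j l')); last first.
    by apply: val_inj; rewrite /= /bump /= !add1n ltnS addnS.
  by rewrite !liftK ffunE.
by rewrite (_ : lift _ _ = ord0) ?unlift_none //; apply: val_inj.
Qed.

Lemma sum_head_eq (R : nmodType) i (P : pred (Tup i.+1 m)) (F : Tup i.+1 m -> R) :
  \sum_(y | P y && (y ord0 == x0)) F y = \sum_(x | P (tcons x)) F (tcons x).
Proof.
rewrite (reindex_onto (@tcons i) (@delta i ord0 m)) => [|y /andP [_ /eqP y0]]; last first.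
  by apply/eqP; rewrite tcons_eqE y0 !eqxx.
by apply: eq_bigl => x; rewrite tcons0 delta0_tcons !eqxx !andbT.
Qed.

Definition htpy i (v : Pobj k i m) : Pobj k i.+1 m :=
  [ffun y : Tup i.+1 m => if y ord0 == x0 then - v (delta ord0 y) else 0].

Lemma htpy0 i : htpy (0 : Pobj k i m) = 0.
Proof. by apply/ffunP => y; rewrite !ffunE oppr0 if_same. Qed.

Lemma sum_htpyE i (v : Pobj k i m) (P : pred (Tup i.+1 m)) :
  \sum_(y | P y) htpy v y = - \sum_(x | P (tcons x)) v x.
Proof.
rewrite -sumrN; under [RHS]eq_bigr => x _ do rewrite -{1}(delta0_tcons x).
rewrite -(sum_head_eq _ (fun y : Tup i.+1 m => - v (delta ord0 y))) big_mkcondr.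
by apply: eq_bigr => y _; rewrite ffunE; case: eqP.
Qed.

Lemma sum_htpy_delta0 i (v : Pobj k i m) (x : Tup i m) :
  \sum_(y | delta ord0 y == x) htpy v y = - v x.
Proof. by rewrite sum_htpyE (big_pred1 x) // => y; rewrite /= delta0_tcons. Qed.

Lemma sum_htpy_delta_lift i (v : Pobj k i.+1 m) (x : Tup i.+1 m) (j : 'I_i.+1) :
  \sum_(y | delta (lift ord0 j) y == x) htpy v y =
  if x ord0 == x0 then - \sum_(y | delta j y == delta ord0 x) v y else 0.
Proof.
rewrite sum_htpyE; under eq_bigl => y do rewrite delta_lift_tcons tcons_eqE.
by case: eqP => _ //; rewrite big_pred0 ?oppr0.
Qed.

Lemma dmap_htpy0 (v : Pobj k 0 m) : dmap (htpy v) = v.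
Proof.
by apply/ffunP => y; rewrite ffunE big_ord1 sum_htpy_delta0 expr1 mulN1r opprK.
Qed.

Lemma dmap_htpyS i (v : Pobj k i.+1 m) : dmap (htpy v) = v - htpy (dmap v).
Proof.
apply/ffunP => y; rewrite !ffunE big_ord_recl sum_htpy_delta0 expr1 mulN1r opprK.
congr (_ + _).
under eq_bigr => j _ do rewrite sum_htpy_delta_lift.
case: eqP => _; last by rewrite oppr0 big1 // => j _; rewrite mulr0.
rewrite opprK; apply: eq_bigr => j _.
by rewrite lift0 exprS mulN1r mulNr mulrN opprK.
Qed.
End Contraction.

Lemma sum_htpy_head (k : fieldType) i m (w : Pobj k i.+1 m) :
  \sum_(x0 : Surj2 m) htpy x0 [ffun x => - w (tcons x0 x)] = w.
Proof.
apply/ffunP => y; rewrite sum_ffunE (bigD1 (y ord0)) //= big1 => [|x0 y0]; last first.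
  by rewrite ffunE eq_sym (negbTE y0).
rewrite !ffunE eqxx opprK addr0; congr (w _); apply/eqP.
by rewrite tcons_eqE !eqxx.
Qed.

Lemma dmap_dmap (k : fieldType) i m (w : Pobj k i.+2 m) : dmap (dmap w) = 0.
Proof.
elim: i m w => [|i IH] m w; rewrite -(sum_htpy_head w) !raddf_sum big1 // => x0 _;
  rewrite /= dmap_htpyS raddfB /=.
- by rewrite dmap_htpy0 subrr.
- by rewrite dmap_htpyS IH htpy0 subr0 subrr.
Qed.

Lemma Pobj_ord1_eq0 (k : fieldType) i (v : Pobj k i.+1 0) : v = 0.
Proof. by apply/ffunP => x; case: (Surj2_ord1_empty (x ord0)). Qed.

Definition tup0 m : Tup 0 m := ffun0 (card_ord 0).

Lemma tup0_eq m (x : Tup 0 m) : x = tup0 m.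
Proof. by apply/ffunP => -[]. Qed.

Lemma sum_tup0 (R : nmodType) m (F : Tup 0 m -> R) : \sum_x F x = F (tup0 m).
Proof. by rewrite (big_pred1 (tup0 m)) // => x; rewrite /= [x]tup0_eq eqxx. Qed.

Lemma eps_surj (k : fieldType) m (y : T1obj k m) : exists x : Pobj k 0 m, eps x = y.
Proof.
case: m y => [|m] y; last by exists 0; apply/ffunP => -[].
by exists [ffun _ => y ord0]; apply/ffunP => c; rewrite !ffunE sum_tup0 ffunE (ord1 c).
Qed.

Lemma exact_eps (k : fieldType) m (v : Pobj k 0 m) :
  eps v = 0 <-> exists w : Pobj k 1 m, dmap w = v.
Proof.
case: m v => [|m] v; last first.
  split=> [_|_]; last by apply/ffunP => -[].
  by exists (htpy (surj2_witness m) v); apply: dmap_htpy0.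
split=> [eps_v0|[w <-]]; last first.
  rewrite (Pobj_ord1_eq0 w) raddf0.
  by apply/ffunP => c; rewrite !ffunE big1 // => x _; rewrite ffunE.
exists 0; rewrite raddf0; apply/ffunP => x; rewrite [x]tup0_eq.
by have := congr1 (fun f : T1obj k 0 => f ord0) eps_v0; rewrite !ffunE sum_tup0.
Qed.

Lemma exact_dmap (k : fieldType) i m (v : Pobj k i.+1 m) :
  dmap v = 0 <-> exists w : Pobj k i.+2 m, dmap w = v.
Proof.
split=> [dv0|[w <-]]; last exact: dmap_dmap.
case: m v dv0 => [|m] v dv0; first by exists 0; rewrite (Pobj_ord1_eq0 v) raddf0.
by exists (htpy (surj2_witness m) v); rewrite dmap_htpyS dv0 htpy0 subr0.
Qed.

Section Projectivity.
Variables (k : fieldType) (i : nat).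

Definition cube : finType := {ffun 'I_i -> 'I_2}.

Definition tpoints m (x : Tup i m) : {ffun 'I_m.+1 -> cube} :=
  [ffun a => [ffun l => val (x l) a]].

Definition timage m (x : Tup i m) : {set cube} := [set tpoints x a | a : 'I_m.+1].

Definition sdim (S : {set cube}) : nat := #|S|.-1.

Definition enum_point (S : {set cube}) (b : 'I_(sdim S).+1) : cube :=
  nth [ffun => ord0] (enum S) b.

Definition rank_in m (S : {set cube}) (g : {ffun 'I_m.+1 -> cube}) :
    {ffun 'I_m.+1 -> 'I_(sdim S).+1} :=
  [ffun a => inord (index (g a) (enum S))].

(* [None] exactly when [S] is not the image of any tuple (see [canon_spec]). *)
Definition canon (S : {set cube}) : option (Tup i (sdim S)) :=
  [pick e | tpoints e == [ffun b => enum_point b]].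

Lemma tpoints_tpull m n (f : {ffun 'I_m.+1 -> 'I_n.+1}) (fsurj : surjb f) (x : Tup i n) :
  tpoints (tpull fsurj x) = [ffun a => tpoints x (f a)].
Proof. by apply/ffunP => a; apply/ffunP => l; rewrite !ffunE. Qed.

Lemma timage_tpull m n (f : {ffun 'I_m.+1 -> 'I_n.+1}) (fsurj : surjb f) (x : Tup i n) :
  timage (tpull fsurj x) = timage x.
Proof.
apply/setP => p; rewrite /timage tpoints_tpull; apply/imsetP/imsetP => [[a _ ->]|[b _ ->]].
  by exists (f a); rewrite ?ffunE.
have /existsP [a /eqP <-] := forallP fsurj b.
by exists a; rewrite ?ffunE.
Qed.

Section Image.
Variables (m : nat) (x : Tup i m).

Lemma tpoints_in_enum a : tpoints x a \in enum (timage x).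
Proof. by rewrite mem_enum imset_f. Qed.

Lemma card_timage : #|timage x| = (sdim (timage x)).+1.
Proof. by rewrite /sdim prednK //; apply/card_gt0P; exists (tpoints x ord0); rewrite imset_f. Qed.

Lemma enum_point_rank a : enum_point (rank_in (timage x) (tpoints x) a) = tpoints x a.
Proof.
rewrite /enum_point ffunE inordK ?nth_index ?tpoints_in_enum //.
by rewrite -card_timage cardE index_mem tpoints_in_enum.
Qed.

Lemma rank_in_surj : surjb (rank_in (timage x) (tpoints x)).
Proof.
apply/forallP => b; have b_lt : (b < size (enum (timage x)))%N by rewrite -cardE card_timage.
have /imsetP [a _ ba] : nth [ffun => ord0] (enum (timage x)) b \in timage x.
  by rewrite -mem_enum mem_nth.
apply/existsP; exists a; apply/eqP/val_inj.
by rewrite ffunE -ba index_uniq ?enum_uniq // inord_val.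
Qed.

Lemma canon_spec : exists2 e, canon (timage x) = Some e & tpull rank_in_surj e = x.
Proof.
have coord_surj l : surjb [ffun b : 'I_(sdim (timage x)).+1 => enum_point b l].
  apply/forallP => c; have /existsP [a /eqP xa] := forallP (valP (x l)) c.
  apply/existsP; exists (rank_in (timage x) (tpoints x) a).
  by rewrite ffunE enum_point_rank !ffunE xa.
rewrite /canon; case: pickP => [e /eqP eS | no_canon]; last first.
  have /negP [] := no_canon [ffun l => Sub _ (coord_surj l) : Surj2 _].
  by apply/eqP/ffunP => b; apply/ffunP => l; rewrite !ffunE.
exists e => //; apply/eqP/tup_eqP => l a; rewrite tpullE.
have /ffunP/(_ (rank_in (timage x) (tpoints x) a))/ffunP/(_ l) := eS.
by rewrite [in RHS]ffunE enum_point_rank !ffunE.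
Qed.
End Image.

Definition basis m (e : Tup i m) : Pobj k i m := [ffun y => (y == e)%:R].

Lemma Pmap_basis m n (f : {ffun 'I_m.+1 -> 'I_n.+1}) (fsurj : surjb f) (e : Tup i n) :
  Pmap f (basis e) = basis (tpull fsurj e).
Proof.
apply/ffunP => y; rewrite (PmapE fsurj) big_mkcond (bigD1 e) //= big1 => [|x xe].
  by rewrite !ffunE eqxx addr0 eq_sym; case: eqP.
by rewrite ffunE (negbTE xe) if_same.
Qed.

Lemma sum_basis m (v : Pobj k i m) : \sum_x v x *: basis x = v.
Proof.
apply/ffunP => y; rewrite sum_ffunE (bigD1 y) //= big1 => [|x xy]; rewrite !ffunE.
  by rewrite eqxx addr0; apply: mulr1.
by rewrite eq_sym (negbTE xy); apply: mulr0.
Qed.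

Section Lift.
Variables (G : fdata k) (L : forall n, Tup i n -> fobj G n).

Definition lift_point m (S : {set cube}) (g : {ffun 'I_m.+1 -> cube}) : fobj G m :=
  if canon S is Some e then fmap G (rank_in S g) (L e) else 0.

Definition lift m (v : Pobj k i m) : fobj G m :=
  \sum_x v x *: lift_point (timage x) (tpoints x).

Hypothesis Gfun : is_functor G.

Lemma lift_point_tpull m n (f : {ffun 'I_m.+1 -> 'I_n.+1}) (fsurj : surjb f) (x : Tup i n) :
  lift_point (timage (tpull fsurj x)) (tpoints (tpull fsurj x)) =
  fmap G f (lift_point (timage x) (tpoints x)).
Proof.
have [_ [_ Gcomp]] := Gfun.
rewrite timage_tpull tpoints_tpull /lift_point; have [e -> _] := canon_spec x.
by rewrite -Gcomp ?rank_in_surj //; congr (fmap G _ _); apply/ffunP => a; rewrite !ffunE.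
Qed.

Lemma lift_nat : is_nat (F := Pfun k i) (G := G) lift.
Proof.
have [Glin _] := Gfun.
split=> [n a v w | m n f fsurj v].
  rewrite /lift scaler_sumr -big_split; apply: eq_bigr => x _.
  by rewrite !ffunE scalerDl scalerA.
rewrite /lift (linear_sumZ (Glin _ _ f fsurj)) /=.
under eq_bigr do rewrite (PmapE fsurj) scaler_suml.
rewrite (sum_fibers _ predT (fun x y => v x *: lift_point (timage y) (tpoints y))).
by apply: eq_bigr => x _; rewrite lift_point_tpull.
Qed.

Lemma lift_lifts (H : fdata k) (pi : forall n, fobj G n -> fobj H n)
    (phi : forall n, Pobj k i n -> fobj H n) :
  is_nat pi -> is_nat (F := Pfun k i) phi ->
  (forall n (e : Tup i n), pi n (L e) = phi n (basis e)) ->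
  forall m (v : Pobj k i m), pi m (lift v) = phi m v.
Proof.
move=> [pilin pinat] [philin phinat] piL m v.
rewrite -{2}(sum_basis v) (linear_sumZ (philin m)) (linear_sumZ (pilin m)).
apply: eq_bigr => x _; congr (_ *: _).
have [e ce ex] := canon_spec x.
rewrite /lift_point ce pinat ?rank_in_surj // piL -phinat ?rank_in_surj //=.
by rewrite (Pmap_basis (rank_in_surj x)) ex.
Qed.
End Lift.

Lemma Pfun_projective : projective (Pfun k i).
Proof.
move=> G H Gfun _ pi phi pinat pisurj phinat.
have lifts n (e : Tup i n) : exists g, pi n g == phi n (basis e).
  by have [g pig] := pisurj n (phi n (basis e)); exists g; apply/eqP.
exists (lift (fun n e => xchoose (lifts n e))); split; first exact: lift_nat.
by apply: lift_lifts => // n e; apply/eqP/(xchooseP (lifts n e)).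
Qed.
End Projectivity.

Unset Implicit Arguments.

Theorem lemma3p12 (k : fieldType) :
  (* each P_i = (s_2)^{(x) i} is a projective object of Fun(Gamma_-^o, k) *)
  (forall i : nat, is_functor (Pfun k i) /\ projective (Pfun k i)) /\
  is_functor (T1fun k) /\
  (* the augmentation and the differentials are morphisms of functors *)
  is_nat (F := Pfun k 0) (G := T1fun k) (@eps k) /\
  (forall i : nat, is_nat (F := Pfun k i.+1) (G := Pfun k i) (@dmap k i)) /\
  (* ... -> P_2 -> P_1 -> P_0 -> t_1 -> 0 is exact *)
  (forall m (y : T1obj k m), exists x : Pobj k 0 m, eps x = y) /\
  (forall m (v : Pobj k 0 m), eps v = 0 <-> exists w : Pobj k 1 m, dmap w = v) /\
  (forall (i m : nat) (v : Pobj k i.+1 m),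
     dmap v = 0 <-> exists w : Pobj k i.+2 m, dmap w = v).
Proof.
split; first by move=> i; split; [exact: Pfun_functor | exact: Pfun_projective].
split; first exact: T1fun_functor.
split; first exact: eps_nat.
split; first exact: dmap_nat.
split; first exact: eps_surj.
split; first exact: exact_eps.
exact: exact_dmap.
Qed.
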